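(* For every $n\ge 3$ the set $\Theta$ is non-empty; that is, flexible cross-polytopes of type $(n)$ (the simplest type) exist in the Lobachevsky space $\Lambda^n$.
   Context: Let $\Theta\subset\mathbb{R}^{n+\binom n2}$ be the set of pairs $(\boldsymbol{\lambda},G)$, where $\boldsymbol{\lambda}=(\lambda_1,\dots,\lambda_n)$ has nonzero real entries with $\lambda_p\ne\pm\lambda_q$ for $p\ne q$, and $G=(g_{pq})$ is a real symmetric $n\times n$ matrix with units on the diagonal, such that, with $H=(h_{pq})$ defined by $h_{pp}=1$ and $h_{pq}=\frac{2\lambda_p(\lambda_pg_{pq}-\lambda_q)}{\lambda_p^2-\lambda_q^2}$ for $p\ne q$, the following hold: (i) $G$ is non-degenerate indefinite with negative index of inertia $1$, and all principal minors of $G$ of sizes $2\times2,\dots,(n-1)\times(n-1)$ are strictly positive; (ii) $\sum_{q=1}^n\sum_{r=1}^n g^{qr}h_{pq}h_{pr}<0$ for $p=1,\dots,n$, where $(g^{qr})=G^{-1}$. These are exactly the pairs for which the flexible cross-polytope in $\Lambda^n$ with tangents of half dihedral angles at a fixed facet $t_p(x)=\lambda_p x$ is well defined (with vertices $\mathbf{a}_p=a_p\mathbf{c}_p$ and $\mathbf{b}_p(x)=b_p\big(\sum_q h_{pq}\mathbf{c}_q-\frac{2\lambda_p^2x^2}{\lambda_p^2x^2+1}\mathbf{n}_p+\frac{2\lambda_px}{\lambda_p^2x^2+1}\mathbf{m}\big)$, where $\mathbf{n}_p$ have Gram matrix $G$, $\mathbf{c}_p$ is the dual basis, $\mathbf{m}$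 is a unit vector orthogonal to all $\mathbf{n}_p$, and $a_p=\pm(-g^{pp})^{-1/2}$, $b_p=\pm(-\sum_{q,r}g^{qr}h_{pq}h_{pr})^{-1/2}$). *)

(* the real line is an arbitrary 'R : realType'
   (all realTypes are the real numbers up to isomorphism). *)
From HB Require Import structures.
From mathcomp Require Import all_boot all_order all_algebra.
From mathcomp Require Import reals.
Set Implicit Arguments. Unset Strict Implicit. Unset Printing Implicit Defensive.
Import Order.TTheory GRing.Theory Num.Theory.
Local Open Scope ring_scope.

Section Theta.
Variable R : realFieldType.
Variable n : nat.

Definition qform (G : 'M[R]_n) (x : 'rV[R]_n) : R := (x *m G *m x^T) 0 0.

Definition negdef_subspace k (G : 'M[R]_n) (U : 'M[R]_(k, n)) : Prop :=
  row_free U /\ forall x : 'rV[R]_k, x != 0 -> qform G (x *m U) < 0.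

Definition neg_inertia_index (G : 'M[R]_n) (k : nat) : Prop :=
  (exists U : 'M[R]_(k, n), negdef_subspace G U) /\
  (forall U : 'M[R]_(k.+1, n), ~ negdef_subspace G U).

Definition indefinite (G : 'M[R]_n) : Prop :=
  (exists x, qform G x < 0) /\ (exists x, 0 < qform G x).

Definition principal_minor (G : 'M[R]_n) (S : {set 'I_n}) : R :=
  \det (mxsub (fun i : 'I_#|S| => enum_val i) (fun i : 'I_#|S| => enum_val i) G).

Definition Hmx (lam : 'I_n -> R) (G : 'M[R]_n) : 'M[R]_n :=
  \matrix_(p, q)
    (if p == q then 1
     else 2 * lam p * (lam p * G p q - lam q) / (lam p ^+ 2 - lam q ^+ 2)).

Definition inTheta (lam : 'I_n -> R) (G : 'M[R]_n) : Prop :=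
  [/\ (forall p, lam p != 0),
      (forall p q, p != q -> lam p != lam q /\ lam p != - lam q),
      (G^T = G /\ forall p, G p p = 1),
      ([/\ \det G != 0, indefinite G, neg_inertia_index G 1 &
          (forall S : {set 'I_n}, (2 <= #|S| <= n.-1)%N -> 0 < principal_minor G S)])
    &
      (forall p, qform (invmx G) (row p (Hmx lam G)) < 0)].

End Theta.

From HB Require Import structures.
From mathcomp Require Import all_boot all_order all_algebra.
From mathcomp Require Import reals.
From mathcomp Require Import ring lra zify.
Set Implicit Arguments. Unset Strict Implicit. Unset Printing Implicit Defensive.
Import Order.TTheory GRing.Theory Num.Theory.
Local Open Scope ring_scope.

(* Take for G the equicorrelation matrix (1 - rho) I + rho J with
   rho = -4 / (4n - 5).  Its eigenvalues are 1 - rho > 0 (on the hyperplane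
   orthogonal to the all-ones vector) and 1 + (n - 1) rho = -1 / (4n - 5) < 0,
   which gives condition (i), the k x k principal minors being
   (1 - rho)^(k-1) (1 + (k - 1) rho) > 0 for k <= n - 1.  This choice of rho
   also makes G^-1 = (I - 4 J) / (1 - rho), so condition (ii) for the row h of
   H reads sum h^2 < 4 (sum h)^2, which holds as soon as the positive or the
   negative entries of h outweigh the others three times over.
   With lambda_q = 2 - eps^q, eps = 1 / (100 n), the entry h_pq is of order
   1 / (lambda_q - lambda_p), with the sign of q - p.  In row p < n - 1 the
   positive entry h_p,p+1 ~ eps^-p dominates the negative ones, which are
   O(eps^(1-p)); in the last row every off-diagonal entry is negative and
   h_p,p-1 ~ eps^(1-p) dominates the diagonal entry 1. *)

Lemma ord_ltn_neq n (p q : 'I_n) : (p < q)%N -> p != q.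
Proof. by move=> pq; rewrite -(inj_eq val_inj) neq_ltn pq. Qed.

Section ScalarPlusConst.
Variable F : fieldType.

Lemma det_scalar_add_rank1 m (a : F) (c : 'cV_m.+1) (r : 'rV_m.+1) :
  a != 0 -> \det (a%:M + c *m r) = a ^+ m * (a + (r *m c) 0 0).
Proof.
(* Both block factorizations compute the determinant of the bordered matrix M. *)
move=> a0; pose M := block_mx (1 : 'M_1) r (- c) a%:M.
have -> : \det (a%:M + c *m r) = \det M.
  have -> : M = block_mx 1 0 (- c) 1 *m block_mx 1 r 0 (a%:M + c *m r).
    by rewrite mulmx_block !mul1mx !mul0mx mulmx1 !addr0 mulNmx addrCA addNr addr0.
  by rewrite det_mulmx det_lblock det_ublock !det1 !mul1r.
have -> : M = block_mx (1 + a^-1 *: (r *m c)) r 0 a%:M *m block_mx 1 0 (- (a^-1 *: c)) 1.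
  by rewrite mulmx_block !mulmx1 !mul0mx !mulmx0 !add0r !mulmxN -scalemxAr
    mul_scalar_mx scalerA mulfV // scale1r addrK.
rewrite det_mulmx det_ublock det_lblock !det1 mulr1 det_mx11 det_scalar !mxE eqxx.
by rewrite mulr1n mulr1 exprS; field.
Qed.

Lemma mulmx_const1 m n p (A : 'M[F]_(m, n)) i j :
  (A *m (const_mx 1 : 'M_(n, p))) i j = \sum_k A i k.
Proof. by rewrite mxE; apply: eq_bigr => k _; rewrite mxE mulr1. Qed.

Lemma const1_mul_const1 m n p :
  (const_mx 1 : 'M[F]_(m, n)) *m (const_mx 1 : 'M_(n, p)) = n%:R *: const_mx 1.
Proof.
apply/matrixP => i j; rewrite mulmx_const1 !mxE mulr1.
by under eq_bigr => k _ do rewrite mxE; rewrite sumr_const card_ord.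
Qed.

Lemma scalar_const_mxE n (a b : F) (i j : 'I_n) :
  (a%:M + b *: const_mx 1) i j = a * (i == j)%:R + b.
Proof. by rewrite !mxE mulr1 mulr_natr. Qed.

Lemma mul_scalar_const n (a b a' b' : F) :
  (a%:M + b *: const_mx 1) *m (a'%:M + b' *: const_mx 1 : 'M_n) =
  (a * a')%:M + (a * b' + b * a' + n%:R * b * b') *: const_mx 1.
Proof.
rewrite mulmxDl !mulmxDr !mul_scalar_mx !mul_mx_scalar -scalemxAl -scalemxAr.
rewrite const1_mul_const1 scale_scalar_mx !scalerA -!addrA; congr (_ + _).
by rewrite !scalerDl; congr (_ + (_ + _)); congr (_ *: _); ring.
Qed.

Lemma det_scalar_const m (a b : F) : a != 0 ->
  \det (a%:M + b *: const_mx 1 : 'M_m.+1) = a ^+ m * (a + m.+1%:R * b).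
Proof.
move=> a0.
have -> : b *: const_mx 1 = (const_mx b : 'cV_m.+1) *m (const_mx 1 : 'rV_m.+1).
  by apply/matrixP => i j; rewrite mulmx_const1 !mxE big_ord1 mxE mulr1.
rewrite (det_scalar_add_rank1 _ _ a0) mxE.
by under eq_bigr => k _ do rewrite !mxE mul1r; rewrite sumr_const card_ord mulr_natl.
Qed.

End ScalarPlusConst.

Section Equicorrelation.
Variable F : fieldType.

Definition equicorr n (rho : F) : 'M[F]_n := (1 - rho)%:M + rho *: const_mx 1.

Lemma equicorrE n (rho : F) (i j : 'I_n) : equicorr n rho i j = if i == j then 1 else rho.
Proof. by rewrite scalar_const_mxE; case: eqP => _; rewrite ?mulr1 ?subrK ?mulr0 ?add0r. Qed.

Lemma tr_equicorr n (rho : F) : (equicorr n rho)^T = equicorr n rho.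
Proof. by apply/matrixP => i j; rewrite mxE !equicorrE eq_sym. Qed.

Lemma mxsub_equicorr m n (f : 'I_m -> 'I_n) (rho : F) : injective f ->
  mxsub f f (equicorr n rho) = equicorr m rho.
Proof. by move=> f_inj; apply/matrixP => i j; rewrite mxE !equicorrE (inj_eq f_inj). Qed.

Lemma det_equicorr m (rho : F) : rho != 1 ->
  \det (equicorr m.+1 rho) = (1 - rho) ^+ m * (1 + m%:R * rho).
Proof.
move=> rho1; rewrite det_scalar_const ?subr_eq0 1?eq_sym //; congr (_ * _).
by rewrite -natr1; ring.
Qed.

End Equicorrelation.

Section QuadraticForms.
Variable R : realFieldType.

Lemma qform_scalar_const n (a b : R) (y : 'rV_n) :
  qform (a%:M + b *: const_mx 1) y = a * \sum_i y 0 i ^+ 2 + b * (\sum_i y 0 i) ^+ 2.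
Proof.
have yM j : (y *m (a%:M + b *: const_mx 1)) 0 j = a * y 0 j + b * \sum_i y 0 i.
  rewrite mulmxDr mul_mx_scalar -scalemxAr mxE [(a *: y) 0 j]mxE.
  by rewrite [(b *: (_ : 'rV_n)) 0 j]mxE mulmx_const1.
rewrite /qform mxE; under eq_bigr => j _ do rewrite yM mxE mulrDl.
rewrite big_split /=; congr (_ + _); last by rewrite -mulr_sumr expr2 mulrA.
by rewrite mulr_sumr; apply: eq_bigr => i _; rewrite expr2 mulrA.
Qed.

Lemma qform_delta n (G : 'M[R]_n) i : qform G (delta_mx 0 i) = G i i.
Proof. by rewrite /qform trmx_delta -rowE -colE !mxE. Qed.

Lemma sumsqr_gt0 n (y : 'rV[R]_n) : y != 0 -> 0 < \sum_j y 0 j ^+ 2.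
Proof.
move=> y0; rewrite lt_def sumr_ge0 ?andbT => [|j _]; last exact: sqr_ge0.
apply: contra y0 => /eqP /psumr_eq0P y2_0; apply/eqP/rowP => j.
by apply/eqP; rewrite mxE -sqrf_eq0 y2_0 // => k _; exact: sqr_ge0.
Qed.

Lemma qform_equicorr n (rho : R) y :
  qform (equicorr n rho) y = (1 - rho) * \sum_i y 0 i ^+ 2 + rho * (\sum_i y 0 i) ^+ 2.
Proof. exact: qform_scalar_const. Qed.

Lemma negdef_subspace_equicorr_dim2 n (rho : R) (U : 'M_(2, n)) :
  rho < 1 -> ~ negdef_subspace (equicorr n rho) U.
Proof.
move=> rho1 [freeU negU].
have : kermx (U *m (const_mx 1 : 'cV_n)) != 0.
  by rewrite -mxrank_eq0 mxrank_ker -lt0n subn_gt0 (leq_ltn_trans (rank_leq_col _)).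
case/rowV0Pn => v /sub_kermxP vU0 v0.
have sum0 : \sum_j (v *m U) 0 j = 0.
  by move/matrixP: vU0 => /(_ 0 0); rewrite mulmxA mulmx_const1 mxE.
have := negU v v0; rewrite qform_equicorr sum0 expr0n mulr0 addr0.
by rewrite pmulr_rlt0 ?subr_gt0 // ltNge ltW // sumsqr_gt0 // mulmx_free_eq0.
Qed.

End QuadraticForms.

Section SignedSums.
Variable R : realFieldType.

Definition pos_part (x : R) := if 0 <= x then x else 0.
Definition neg_part (x : R) := if x < 0 then - x else 0.

Lemma pos_part_ge0 x : 0 <= pos_part x.
Proof. by rewrite /pos_part; case: ifP. Qed.

Lemma neg_part_ge0 x : 0 <= neg_part x.
Proof. by rewrite /neg_part; case: ifP => // /ltW; rewrite oppr_ge0. Qed.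

Lemma pos_part_sub_neg_part x : pos_part x - neg_part x = x.
Proof. by rewrite /pos_part /neg_part; case: leP => _; rewrite ?subr0 ?sub0r ?opprK. Qed.

Lemma sqr_pos_part_add_neg_part x : pos_part x ^+ 2 + neg_part x ^+ 2 = x ^+ 2.
Proof.
by rewrite /pos_part /neg_part; case: leP => _; rewrite expr0n ?addr0 ?add0r ?sqrrN.
Qed.

Lemma ler_psum_term n (f : 'I_n -> R) i : (forall j, 0 <= f j) -> f i <= \sum_j f j.
Proof. by move=> f_ge0; rewrite (bigD1 i) //= lerDl sumr_ge0. Qed.

Lemma sumsqr_le_sqrsum n (f : 'I_n -> R) : (forall j, 0 <= f j) ->
  \sum_j f j ^+ 2 <= (\sum_j f j) ^+ 2.
Proof.
move=> f_ge0; rewrite [X in _ <= X]expr2 mulr_suml; apply: ler_sum => i _.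
by rewrite expr2 ler_wpM2l // ler_psum_term.
Qed.

Lemma sumsqr_lt_4sqrsum n (h : 'I_n -> R) :
  let P := \sum_i pos_part (h i) in let N := \sum_i neg_part (h i) in
  (0 < P /\ 3 * N <= P) \/ (0 < N /\ 3 * P <= N) ->
  \sum_i h i ^+ 2 < 4 * (\sum_i h i) ^+ 2.
Proof.
move=> P N dom.
have sumE : \sum_i h i = P - N.
  by rewrite -sumrB; apply: eq_bigr => i _; rewrite pos_part_sub_neg_part.
have sum2E : \sum_i h i ^+ 2 = \sum_i pos_part (h i) ^+ 2 + \sum_i neg_part (h i) ^+ 2.
  by rewrite -big_split; apply: eq_bigr => i _; rewrite -sqr_pos_part_add_neg_part.
have P2 := sumsqr_le_sqrsum (fun i => pos_part_ge0 (h i)).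
have N2 := sumsqr_le_sqrsum (fun i => neg_part_ge0 (h i)).
have P0 : 0 <= P by apply: sumr_ge0 => i _; apply: pos_part_ge0.
have N0 : 0 <= N by apply: sumr_ge0 => i _; apply: neg_part_ge0.
(* sum h^2 <= P^2 + N^2, while (sum h)^2 = (P - N)^2 >= (2/3)^2 max(P, N)^2 *)
rewrite sumE sum2E; rewrite -/P -/N in P2 N2; case: dom => -[]; nra.
Qed.

End SignedSums.

Section HEntries.
Variable R : realFieldType.

Lemma Hmx_entry_scaled_bounds (x y g : R) : 1 <= x <= 2 -> 1 <= y <= 2 -> -1 < g < 0 ->
  x != y -> 1 / 2 <= 2 * x * (x * g - y) / (x ^+ 2 - y ^+ 2) * (y - x) <= 8.
Proof.
move=> /andP[x1 x2] /andP[y1 y2] /andP[g1 g0] xy.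
have xy0 : 0 < x + y by lra.
have -> : 2 * x * (x * g - y) / (x ^+ 2 - y ^+ 2) * (y - x) = 2 * x * (y - x * g) / (x + y).
  by field; rewrite subr_sqr mulf_neq0 ?subr_eq0 ?(gt_eqF xy0).
by rewrite ler_pdivlMr // ler_pdivrMr //; apply/andP; split; nra.
Qed.

End HEntries.

Section Construction.
Variable R : realFieldType.
Variable n : nat.
Hypothesis n_ge3 : (3 <= n)%N.

Definition rho : R := - 4 / (4 * n%:R - 5).
Definition eps : R := (100 * n%:R)^-1.
Definition lam (q : 'I_n) : R := 2 - eps ^+ q.

Local Notation G := (equicorr n rho).
Local Notation H := (Hmx lam G).

Lemma natr_ge3 : 3 <= n%:R :> R.
Proof. by rewrite (ler_nat R 3 n). Qed.

Lemma rho_mul : rho * (4 * n%:R - 5) = - 4.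
Proof. by rewrite /rho mulrAC -mulrA divff ?mulr1 //; have := natr_ge3; lra. Qed.

Lemma rho_bounds : -1 < rho < 0.
Proof. by have := rho_mul; have := natr_ge3 => n3 rhoE; apply/andP; split; nra. Qed.

Lemma one_sub_rho_gt0 : 0 < 1 - rho.
Proof. by have := rho_bounds; lra. Qed.

Lemma equicorr_rho_mul_inv : G *m (((1 - rho)^-1)%:M + (- 4 / (1 - rho)) *: const_mx 1) = 1%:M.
Proof.
have rho1 := one_sub_rho_gt0; have := rho_mul.
rewrite mul_scalar_const mulfV ?gt_eqF // => rhoE.
have -> : (1 - rho) * (-4 / (1 - rho)) + rho * (1 - rho)^-1 + n%:R * rho * (-4 / (1 - rho))
    = (- 4 - rho * (4 * n%:R - 5)) / (1 - rho) by field; rewrite gt_eqF.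
by rewrite rhoE subrr mul0r scale0r addr0.
Qed.

Lemma equicorr_rho_unit : G \in unitmx.
Proof. exact: (mulmx1_unit equicorr_rho_mul_inv).1. Qed.

Lemma qform_invmx_equicorr_rho (h : 'rV_n) :
  qform (invmx G) h = (\sum_i h 0 i ^+ 2 - 4 * (\sum_i h 0 i) ^+ 2) / (1 - rho).
Proof.
have -> : invmx G = ((1 - rho)^-1)%:M + (- 4 / (1 - rho)) *: const_mx 1.
  by rewrite -[RHS](mulKmx equicorr_rho_unit) equicorr_rho_mul_inv mulmx1.
rewrite qform_scalar_const.
by field; rewrite gt_eqF // one_sub_rho_gt0.
Qed.

Lemma one_sub_rho_add_n_rho_lt0 : 1 - rho + n%:R * rho < 0.
Proof.
have n5 : 0 < 4 * n%:R - 5 :> R by have := natr_ge3; lra.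
have E : (1 - rho + n%:R * rho) * (4 * n%:R - 5) = -1.
  have -> : (1 - rho + n%:R * rho) * (4 * n%:R - 5)
      = 4 * n%:R - 5 - rho * (4 * n%:R - 5) + n%:R * (rho * (4 * n%:R - 5)) by ring.
  by rewrite rho_mul; ring.
by rewrite -(pmulr_llt0 _ n5) E ltrN10.
Qed.

Lemma qform_equicorr_rho_const_lt0 (c : R) : c != 0 -> qform G (const_mx c) < 0.
Proof.
move=> c0; rewrite qform_equicorr.
have sumE (f : R -> R) : \sum_i f ((const_mx c : 'rV_n) 0 i) = n%:R * f c.
  by rewrite (eq_bigr (fun=> f c)) => [|i _]; rewrite ?mxE // sumr_const card_ord mulr_natl.
rewrite (sumE (fun x => x ^+ 2)) (sumE id) /=.
have -> : (1 - rho) * (n%:R * c ^+ 2) + rho * (n%:R * c) ^+ 2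
    = c ^+ 2 * n%:R * (1 - rho + n%:R * rho) by ring.
rewrite pmulr_rlt0 ?one_sub_rho_add_n_rho_lt0 // mulr_gt0 ?exprn_even_gt0 //.
by have := natr_ge3; lra.
Qed.

Lemma negdef_equicorr_rho_ones : negdef_subspace G (const_mx 1 : 'M_(1, n)).
Proof.
have i0 : 'I_n by exists 0%N; rewrite (leq_trans _ n_ge3).
have ones0 : (const_mx 1 : 'rV[R]_n) != 0.
  by apply/negP => /eqP/rowP/(_ i0); rewrite !mxE => /eqP; rewrite oner_eq0.
split; first by rewrite /row_free rank_rV ones0.
move=> x x0; have -> : x *m const_mx 1 = const_mx (x 0 0) :> 'rV_n.
  by apply/rowP => j; rewrite mulmx_const1 big_ord1 mxE.
apply: qform_equicorr_rho_const_lt0; apply: contra x0 => /eqP x00.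
by apply/eqP/rowP => j; rewrite ord1 x00 mxE.
Qed.

Lemma neg_inertia_equicorr_rho : neg_inertia_index G 1.
Proof.
split; first by exists (const_mx 1); exact: negdef_equicorr_rho_ones.
by move=> U; apply: negdef_subspace_equicorr_dim2; have := rho_bounds; lra.
Qed.

Lemma indefinite_equicorr_rho : indefinite G.
Proof.
have i0 : 'I_n by exists 0%N; rewrite (leq_trans _ n_ge3).
split; first by exists (const_mx 1); apply: qform_equicorr_rho_const_lt0; rewrite oner_eq0.
by exists (delta_mx 0 i0); rewrite qform_delta equicorrE eqxx.
Qed.

Lemma principal_minor_equicorr_rho_gt0 (S : {set 'I_n}) :
  (2 <= #|S| <= n.-1)%N -> 0 < principal_minor G S.
Proof.
rewrite /principal_minor mxsub_equicorr; last exact: enum_val_inj.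
case: #|S| => [//|m] /andP[_ mn]; have := rho_bounds => /andP[rho1 rho0].
rewrite det_equicorr ?lt_eqF //; last by lra.
apply: mulr_gt0; first by apply: exprn_gt0; lra.
have : m%:R <= n%:R - 2 :> R.
  by rewrite -(@natrB _ n 2) ?ler_nat; lia.
have := rho_mul; have := natr_ge3; nra.
Qed.

Lemma eps_gt0 : 0 < eps.
Proof. by rewrite invr_gt0; have := natr_ge3; lra. Qed.

Lemma n_mul_eps : n%:R * eps = 1 / 100.
Proof. by rewrite /eps; field; have := natr_ge3; lra. Qed.

Lemma mul300_eps_le1 : 300 * eps <= 1.
Proof. by have := n_mul_eps; have := natr_ge3; have := eps_gt0; nra. Qed.

Lemma expr_eps_gt0 k : 0 < eps ^+ k.
Proof. exact/exprn_gt0/eps_gt0. Qed.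

Lemma expr_eps_le_mul (q p : nat) : (q < p)%N -> eps ^+ p <= eps * eps ^+ q.
Proof.
move=> qp; rewrite -exprS; apply: ler_wiXn2l => //; last by have := mul300_eps_le1; lra.
exact: ltW eps_gt0.
Qed.

Lemma expr_eps_lt (q p : nat) : (q < p)%N -> eps ^+ p < eps ^+ q.
Proof. by move=> qp; rewrite ltr_iXn2l ?eps_gt0 //; have := mul300_eps_le1; lra. Qed.

Lemma lam_bounds q : 1 <= lam q <= 2.
Proof.
have : eps ^+ q <= 1 by rewrite exprn_ile1 ?(ltW eps_gt0) //; have := mul300_eps_le1; lra.
by have := expr_eps_gt0 q; rewrite /lam => *; apply/andP; split; lra.
Qed.

Lemma lam_lt (q p : 'I_n) : (q < p)%N -> lam q < lam p.
Proof. by move/expr_eps_lt; rewrite /lam; lra. Qed.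

Lemma lam_inj (p q : 'I_n) : p != q -> lam p != lam q.
Proof.
case: (ltngtP p q) => [pq _|qp _|/val_inj ->]; last by rewrite eqxx.
  by rewrite lt_eqF ?lam_lt.
by rewrite gt_eqF ?lam_lt.
Qed.

Lemma Hmx_diag p : H p p = 1.
Proof. by rewrite mxE eqxx. Qed.

Lemma Hmx_scaled_bounds (p q : 'I_n) : p != q ->
  1 / 2 <= H p q * (eps ^+ p - eps ^+ q) <= 8.
Proof.
move=> pq; rewrite mxE (negbTE pq) equicorrE (negbTE pq).
have -> : eps ^+ p - eps ^+ q = lam q - lam p by rewrite /lam; ring.
by apply: Hmx_entry_scaled_bounds; rewrite ?lam_bounds ?rho_bounds ?lam_inj.
Qed.

Lemma Hmx_gt0 (p q : 'I_n) : (p < q)%N -> 0 < H p q.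
Proof.
move=> pq; have /andP[lb _] := Hmx_scaled_bounds (ord_ltn_neq pq).
have := expr_eps_lt pq; nra.
Qed.

Lemma Hmx_lt0 (p q : 'I_n) : (q < p)%N -> H p q < 0.
Proof.
move=> qp; have pq : p != q by rewrite eq_sym ord_ltn_neq.
have /andP[lb _] := Hmx_scaled_bounds pq; have := expr_eps_lt qp; nra.
Qed.

Local Notation possum p := (\sum_q pos_part (H p q)).
Local Notation negsum p := (\sum_q neg_part (H p q)).

Lemma expr_eps_mul_neg_part_le (p q : 'I_n) : eps ^+ p * neg_part (H p q) <= 16 * eps.
Proof.
have e0 := eps_gt0; have e300 := mul300_eps_le1.
have [qp|pq] := ltnP q p; last first.
  have H_ge0 : 0 <= H p q.
    case: (ltngtP p q) pq => [pq _|//|/val_inj -> _]; last by rewrite Hmx_diag.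
    exact/ltW/Hmx_gt0.
  by rewrite /neg_part ltNge H_ge0 mulr0 mulr_ge0 ?ltW.
have pq : p != q by rewrite eq_sym ord_ltn_neq.
have /andP[_ ub] := Hmx_scaled_bounds pq.
have Hq := Hmx_lt0 qp; rewrite /neg_part Hq.
have epq := expr_eps_le_mul qp; have eqp := expr_eps_lt qp; have ep := expr_eps_gt0 p.
have gap : eps ^+ p <= 2 * eps * (eps ^+ q - eps ^+ p) by nra.
nra.
Qed.

Lemma row_pos_part_dominates (p : 'I_n) : (p.+1 < n)%N ->
  0 < possum p /\ 3 * negsum p <= possum p.
Proof.
move=> pn; pose p1 : 'I_n := Ordinal pn.
have c0 := expr_eps_gt0 p.
have Hp1 : 1 / 2 <= eps ^+ p * H p p1.
  have pp1 : (p < p1)%N by [].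
  have /andP[lb _] := Hmx_scaled_bounds (ord_ltn_neq pp1).
  have := Hmx_gt0 pp1; have := expr_eps_gt0 p1; nra.
have P1 : H p p1 <= possum p.
  apply: le_trans (ler_psum_term p1 (fun q => pos_part_ge0 (H p q))).
  by rewrite /pos_part ifT // ltW // Hmx_gt0.
have Nb : eps ^+ p * negsum p <= 16 / 100.
  rewrite mulr_sumr; apply: le_trans (ler_sum _ (fun q _ => expr_eps_mul_neg_part_le p q)) _.
  by rewrite sumr_const card_ord -[_ *+ n]mulr_natl mulrCA n_mul_eps; lra.
have NP : 0 <= negsum p by apply: sumr_ge0 => q _; exact: neg_part_ge0.
split; nra.
Qed.

Lemma row_neg_part_dominates (p : 'I_n) : (n <= p.+1)%N ->
  0 < negsum p /\ 3 * possum p <= negsum p.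
Proof.
move=> np; have pn := ltn_ord p.
have P1 : possum p = 1.
  rewrite (bigD1 p) //= Hmx_diag /pos_part ler01 big1 ?addr0 // => q qp.
  have : (q < p)%N by move: qp (ltn_ord q); rewrite -(inj_eq val_inj) /=; lia.
  by move/Hmx_lt0; rewrite leNgt => ->.
have pm_lt : (p.-1 < n)%N by lia.
pose pm : 'I_n := Ordinal pm_lt.
have pmp : (pm < p)%N by rewrite /=; lia.
have N1 : 150 <= neg_part (H p pm).
  have pq : p != pm by rewrite eq_sym ord_ltn_neq.
  have /andP[lb _] := Hmx_scaled_bounds pq.
  have Hpm := Hmx_lt0 pmp; rewrite /neg_part Hpm.
  have : eps ^+ pm <= eps.
    rewrite -[X in _ <= X]expr1 ler_wiXn2l ?(ltW eps_gt0) //=; last by lia.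
    by have := mul300_eps_le1; lra.
  have := expr_eps_gt0 p; have := mul300_eps_le1; have := eps_gt0; nra.
have N2 := ler_psum_term pm (fun q => neg_part_ge0 (H p q)).
by rewrite P1; split; lra.
Qed.

Lemma qform_invmx_row_lt0 p : qform (invmx G) (row p H) < 0.
Proof.
rewrite qform_invmx_equicorr_rho pmulr_llt0 ?invr_gt0 ?one_sub_rho_gt0 // subr_lt0.
under eq_bigr => q _ do rewrite mxE.
under [X in _ < _ * X ^+ 2]eq_bigr => q _ do rewrite mxE.
apply: sumsqr_lt_4sqrsum.
have [pn|np] := ltnP p.+1 n.
  by left; exact: row_pos_part_dominates.
by right; exact: row_neg_part_dominates.
Qed.

Lemma lam_equicorr_rho_inTheta : inTheta lam G.
Proof.
have lam_gt0 q : 0 < lam q by have /andP[+ _] := lam_bounds q; lra.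
split.
- by move=> p; rewrite gt_eqF.
- move=> p q pq; split; first exact: lam_inj.
  by rewrite gt_eqF // (lt_trans _ (lam_gt0 p)) // oppr_lt0.
- by split=> [|p]; rewrite ?tr_equicorr // equicorrE eqxx.
- split; [by rewrite -unitfE -unitmxE equicorr_rho_unit | exact: indefinite_equicorr_rho |
    exact: neg_inertia_equicorr_rho | exact: principal_minor_equicorr_rho_gt0].
- exact: qform_invmx_row_lt0.
Qed.

End Construction.

Theorem mainTheorem16 (R : realType) (n : nat) (hn : (3 <= n)%N) :
  exists (lam : 'I_n -> R) (G : 'M[R]_n), inTheta lam G.
Proof. by exists (@lam R n), (equicorr n (rho R n)); exact: lam_equicorr_rho_inTheta. Qed.
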